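(* Let $G=G_0*_HG_1$ be a nondegenerate free product with amalgamation and suppose that $\ker G$ is trivial. Then $G$ is a weak$^*$ Powers group.
   Context: The amalgam is nondegenerate if $([G_0:H]-1)([G_1:H]-1)\ge2$, and $\ker G=\bigcap_{g\in G}gHg^{-1}$. A group $G$ is a weak$^*$ Powers group if for every $f\in G\setminus\{e\}$ and every integer $k\ge1$ there exist a partition $G=D\sqcup E$ and elements $g_1,\dots,g_k\in G$ with $fD\cap D=\varnothing$ and $g_iE\cap g_jE=\varnothing$ for all distinct $i,j$. *)

From Stdlib Require Import List Arith.
Import ListNotations.

Record Group := {
  carrier :> Type;
  gmul : carrier -> carrier -> carrier;
  ginv : carrier -> carrier;
  gone : carrier;
  gmul_assoc : forall x y z, gmul x (gmul y z) = gmul (gmul x y) z;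
  gmul_1l : forall x, gmul gone x = x;
  gmul_1r : forall x, gmul x gone = x;
  gmul_Vl : forall x, gmul (ginv x) x = gone;
  gmul_Vr : forall x, gmul x (ginv x) = gone
}.

Arguments gmul {g}.
Arguments ginv {g}.
Arguments gone {g}.

Definition is_subgroup (G : Group) (S : G -> Prop) : Prop :=
  S gone /\ (forall x y, S x -> S y -> S (gmul x y)) /\ (forall x, S x -> S (ginv x)).

Definition gprod (G : Group) (l : list G) : G := fold_right gmul gone l.

(* A (nonempty) reduced word for the amalgam G0 *_H G1: a list of labelled
   letters (b, x) with x in G_b \ H (G_false = G0, G_true = G1), consecutive
   letters coming from different factors. *)
Fixpoint labels_alternate (l : list bool) : Prop :=
  match l with
  | b1 :: ((b2 :: _) as t) => b1 <> b2 /\ labels_alternate t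
  | _ => True
  end.

Definition reduced_word (G : Group) (G0 G1 H : G -> Prop) (w : list (bool * G)) : Prop :=
  w <> [] /\
  Forall (fun p : bool * G =>
            (if fst p then G1 (snd p) else G0 (snd p)) /\ ~ H (snd p)) w /\
  labels_alternate (map fst w).

(* G is (internally) the free product of its subgroups G0 and G1 amalgamated
   along H = G0 ∩ G1: G is generated by G0 ∪ G1 and no reduced word represents
   the identity (normal form theorem; Serre, Trees, §1.2). *)
Definition is_amalgam (G : Group) (G0 G1 H : G -> Prop) : Prop :=
  is_subgroup G G0 /\ is_subgroup G G1 /\
  (forall x, H x <-> (G0 x /\ G1 x)) /\
  (forall x : G, exists l : list G, Forall (fun y => G0 y \/ G1 y) l /\ x = gprod G l) /\
  (forall w, reduced_word G G0 G1 H w -> gprod G (map snd w) <> gone).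

(* [K : H] >= n  (n <= index, index a possibly infinite cardinal):
   there are n elements of K lying in pairwise distinct left cosets of H. *)
Definition index_ge (G : Group) (K H : G -> Prop) (n : nat) : Prop :=
  exists a : nat -> G,
    (forall i, i < n -> K (a i)) /\
    (forall i j, i < n -> j < n -> i <> j -> ~ H (gmul (ginv (a i)) (a j))).

(* ([G0:H]-1)([G1:H]-1) >= 2, with indices possibly infinite:
   both indices are >= 2 and at least one of them is >= 3. *)
Definition nondegenerate (G : Group) (G0 G1 H : G -> Prop) : Prop :=
  index_ge G G0 H 2 /\ index_ge G G1 H 2 /\ (index_ge G G0 H 3 \/ index_ge G G1 H 3).

(* ker G = ⋂_{g} g H g^{-1} is trivial *)
Definition trivial_kernel (G : Group) (H : G -> Prop) : Prop :=
  forall x : G, (forall g : G, H (gmul (ginv g) (gmul x g))) -> x = gone.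

Definition weak_star_Powers (G : Group) : Prop :=
  forall f : G, f <> gone -> forall k : nat, 1 <= k ->
    exists (D E : G -> Prop) (g : nat -> G),
      (forall x, D x \/ E x) /\ (forall x, ~ (D x /\ E x)) /\
      (forall x, ~ (D x /\ D (gmul f x))) /\
      (forall i j, i < k -> j < k -> i <> j ->
         forall x y, E x -> E y -> gmul (g i) x <> gmul (g j) y).

(* A nontrivial [f] has a conjugate outside [H] because the kernel is trivial,
   and cyclic reduction turns it into a single letter or a reduced word [s r]
   of even length starting in the factor [G_B] with [[G_B : H] >= 3].  For a
   letter of [G_b] take [E] = the words starting in [G_b]; for [s r] take
   [E] = the words not starting in [G_B] together with their [s]-translates.
   Ping-pong gives [E x \/ E (f x)] for every [x].  Pick letters [a1], [a2],
   [a1^-1 a2] of [G_B] and [c] of the other factor: by the normal form theorem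
   the translates of the words not starting in [G_B] by the elements
   [(a1 c)^i a2] are pairwise disjoint, and every such [E] embeds into one of
   them. *)

From Stdlib Require Import List Arith Lia Classical.
Import ListNotations.

Section GroupFacts.
Variable G : Group.

Lemma mulgA (x y z : G) : gmul (gmul x y) z = gmul x (gmul y z).
Proof. symmetry; apply gmul_assoc. Qed.

Lemma mulKg (x y : G) : gmul (ginv x) (gmul x y) = y.
Proof. rewrite gmul_assoc, gmul_Vl, gmul_1l. reflexivity. Qed.

Lemma mulKVg (x y : G) : gmul x (gmul (ginv x) y) = y.
Proof. rewrite gmul_assoc, gmul_Vr, gmul_1l. reflexivity. Qed.

Lemma mulg_cancel_l (x y z : G) : gmul x y = gmul x z -> y = z.
Proof. intro E. rewrite <- (mulKg x y), E, mulKg. reflexivity. Qed.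

Lemma invg_unique (a b : G) : gmul a b = gone -> b = ginv a.
Proof. intro E. rewrite <- (mulKg a b), E, gmul_1r. reflexivity. Qed.

Lemma invgK (x : G) : ginv (ginv x) = x.
Proof. symmetry. apply invg_unique, gmul_Vl. Qed.

Lemma invMg (x y : G) : ginv (gmul x y) = gmul (ginv y) (ginv x).
Proof.
  symmetry. apply invg_unique.
  rewrite mulgA, (gmul_assoc _ y), gmul_Vr, gmul_1l, gmul_Vr. reflexivity.
Qed.

Definition conjg (t f : G) : G := gmul (ginv t) (gmul f t).

Lemma conjg1 (f : G) : conjg gone f = f.
Proof.
  unfold conjg. rewrite gmul_1r, <- (gmul_1l _ (ginv gone)), gmul_Vr, gmul_1l.
  reflexivity.
Qed.

Lemma conjgM (s t f : G) : conjg t (conjg s f) = conjg (gmul s t) f.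
Proof. unfold conjg. rewrite invMg, !mulgA. reflexivity. Qed.

Definition has_disjoint_translates (k : nat) (E : G -> Prop) : Prop :=
  exists g : nat -> G, forall i j, i < k -> j < k -> i <> j ->
    forall x y, E x -> E y -> gmul (g i) x <> gmul (g j) y.

Lemma disjoint_translates_sub k (E E' : G -> Prop) (u : G) :
  has_disjoint_translates k E -> (forall y, E' y -> E (gmul u y)) ->
  has_disjoint_translates k E'.
Proof.
  intros [g disj] sub. exists (fun i => gmul (g i) u).
  intros i j hi hj ij x y ex ey Eq.
  apply (disj i j hi hj ij (gmul u x) (gmul u y)); auto.
  rewrite !gmul_assoc. exact Eq.
Qed.

(* [E] plays the role of the set [E] of the definition of weak* Powers groups,
   its complement that of [D]. *)
Definition weak_powers_at (k : nat) (f : G) : Prop :=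
  exists E, has_disjoint_translates k E /\ forall x, E x \/ E (gmul f x).

Lemma weak_powers_at_conjg k (t f : G) :
  weak_powers_at k (conjg t f) -> weak_powers_at k f.
Proof.
  intros [E [disj cov]]. exists (fun y => E (gmul (ginv t) y)). split.
  - apply disjoint_translates_sub with (E := E) (u := ginv t); auto.
  - intro y. destruct (cov (gmul (ginv t) y)) as [h|h]; [left; auto|right].
    unfold conjg in h. rewrite !mulgA, mulKVg in h. exact h.
Qed.

End GroupFacts.

Lemma weak_star_Powers_of_weak_powers_at (G : Group) :
  (forall f : G, f <> gone -> forall k, 1 <= k -> weak_powers_at G k f) ->
  weak_star_Powers G.
Proof.
  intros W f nf k hk.
  destruct (W f nf k hk) as [E [[g disj] cov]].
  exists (fun x => ~ E x), E, g. split; [|split; [|split]].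
  - intro x. destruct (classic (E x)); tauto.
  - intro x. tauto.
  - intros x [h1 h2]. destruct (cov x); contradiction.
  - exact disj.
Qed.

Lemma neq_negb (b c : bool) : b <> c -> b = negb c.
Proof. destruct b, c; simpl; congruence. Qed.

Section Amalgam.
Variables (G : Group) (G0 G1 H : G -> Prop).
Hypothesis amalgam : is_amalgam G G0 G1 H.

Definition factor (b : bool) : G -> Prop := if b then G1 else G0.
Definition letter (b : bool) (a : G) : Prop := factor b a /\ ~ H a.

Lemma factor_subgroup b : is_subgroup G (factor b).
Proof. destruct amalgam as [s0 [s1 _]]. destruct b; assumption. Qed.

Lemma factor_mul b x y : factor b x -> factor b y -> factor b (gmul x y).
Proof. apply (factor_subgroup b). Qed.

Lemma factor_inv b x : factor b x -> factor b (ginv x).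
Proof. apply (factor_subgroup b). Qed.

Lemma H_factor b x : H x -> factor b x.
Proof.
  destruct amalgam as [_ [_ [hH _]]]. intro h. apply hH in h. destruct b; simpl; tauto.
Qed.

Lemma H_subgroup : is_subgroup G H.
Proof.
  destruct amalgam as [[o0 [m0 i0]] [[o1 [m1 i1]] [hH _]]].
  split; [|split]; intros; rewrite hH in *; firstorder.
Qed.

Lemma H_mul x y : H x -> H y -> H (gmul x y).
Proof. apply H_subgroup. Qed.

Lemma H_inv x : H x -> H (ginv x).
Proof. apply H_subgroup. Qed.

Lemma factor_cases b z : factor b z -> H z \/ letter b z.
Proof. intro fz. destruct (classic (H z)); [left | right; split]; auto. Qed.

Lemma letter_mulr b a h : letter b a -> H h -> letter b (gmul a h).
Proof.
  intros [fa na] hh. split.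
  - apply factor_mul; auto. apply H_factor; auto.
  - intro c. apply na. rewrite <- (gmul_1r _ a), <- (gmul_Vr _ h), gmul_assoc.
    apply H_mul; auto. apply H_inv; auto.
Qed.

Lemma letter_mull b a h : letter b a -> H h -> letter b (gmul h a).
Proof.
  intros [fa na] hh. split.
  - apply factor_mul; auto. apply H_factor; auto.
  - intro c. apply na. rewrite <- (mulKg _ h a). apply H_mul; auto. apply H_inv; auto.
Qed.

Lemma letter_inv b a : letter b a -> letter b (ginv a).
Proof.
  intros [fa na]. split; [apply factor_inv; auto|].
  intro c. apply na. rewrite <- (invgK _ a). apply H_inv; auto.
Qed.

Lemma letter_left_quotient b x y :
  factor b x -> factor b y -> ~ H (gmul (ginv x) y) -> letter b (gmul (ginv x) y).
Proof. intros fx fy n. split; auto. apply factor_mul; auto. apply factor_inv; auto. Qed.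

Inductive alt : nat -> bool -> bool -> G -> Prop :=
| alt1 b a : letter b a -> alt 1 b b a
| altS n b e a g : letter b a -> alt n (negb b) e g -> alt (S n) b e (gmul a g).

Definition starts (b : bool) (g : G) : Prop := exists n e, alt n b e g.

(* By [starts_disjoint] and [starts_or_not_starting] this is the complement of
   [starts b]. *)
Definition not_starting (b : bool) (g : G) : Prop := H g \/ starts (negb b) g.

Lemma alt_mull_H n b e g h : H h -> alt n b e g -> alt n b e (gmul h g).
Proof.
  intros hh A. destruct A.
  - constructor. apply letter_mull; auto.
  - rewrite gmul_assoc. constructor; auto. apply letter_mull; auto.
Qed.

Lemma alt_mulr_H n b e g h : H h -> alt n b e g -> alt n b e (gmul g h).
Proof.
  intros hh A. induction A.
  - constructor. apply letter_mulr; auto.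
  - rewrite mulgA. constructor; auto.
Qed.

Lemma alt_cat n b e g m e' g' :
  alt n b e g -> alt m (negb e) e' g' -> alt (n + m) b e' (gmul g g').
Proof.
  intros A; revert m e' g'. induction A; intros m e' g' A'.
  - simpl. constructor; auto.
  - rewrite mulgA. simpl. constructor; auto.
Qed.

Lemma alt_inv n b e g : alt n b e g -> alt n e b (ginv g).
Proof.
  induction 1.
  - constructor. apply letter_inv; auto.
  - rewrite invMg, <- Nat.add_1_r. apply alt_cat with (e := negb b); auto.
    rewrite Bool.negb_involutive. constructor. apply letter_inv; auto.
Qed.

Lemma alt_length_pos n b e g : alt n b e g -> 1 <= n.
Proof. destruct 1; lia. Qed.

Lemma alt_length_ge2 n b e g : alt n b e g -> b <> e -> 2 <= n.
Proof.
  destruct 1 as [|n b e a g _ A]; [congruence|]. apply alt_length_pos in A. lia.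
Qed.

Lemma alt_first n b e f : alt n b e f -> 2 <= n ->
  exists a g, letter b a /\ alt (n - 1) (negb b) e g /\ f = gmul a g.
Proof.
  destruct 1 as [|n b e a g la A]; [lia|].
  exists a, g. simpl. rewrite Nat.sub_0_r. auto.
Qed.

Lemma alt_last n b e f : alt n b e f -> b <> e ->
  exists m x, alt (n - 1) b (negb e) m /\ letter e x /\ f = gmul m x.
Proof.
  intro A. apply alt_inv in A. intro be.
  destruct (alt_first _ _ _ _ A) as [x [m [lx [Am E]]]];
    [apply (alt_length_ge2 _ _ _ _ A); congruence|].
  exists (ginv m), (ginv x). split; [|split].
  - apply alt_inv in Am. exact Am.
  - apply letter_inv; auto.
  - rewrite <- invMg, <- E, invgK. reflexivity.
Qed.

Lemma alt_reduced_word n b e g : alt n b e g ->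
  exists x w, reduced_word G G0 G1 H ((b, x) :: w) /\ g = gprod G (map snd ((b, x) :: w)).
Proof.
  induction 1 as [b a [fa na] | n b e a g [fa na] A [x [w [[_ [F L]] E]]]].
  - exists a, []. split; [|simpl; rewrite gmul_1r; reflexivity].
    split; [discriminate|]. split; [|exact I].
    repeat constructor; auto; destruct b; exact fa.
  - exists a, ((negb b, x) :: w). split; [|rewrite E; reflexivity].
    split; [discriminate|]. split.
    + constructor; auto. split; auto. destruct b; exact fa.
    + split; [destruct b; discriminate | exact L].
Qed.

Lemma alt_neq1 n b e g : alt n b e g -> g <> gone.
Proof.
  intros A E. destruct (alt_reduced_word _ _ _ _ A) as [x [w [R Eg]]].
  destruct amalgam as [_ [_ [_ [_ normal_form]]]].
  apply (normal_form _ R). rewrite <- Eg. exact E.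
Qed.

Lemma starts_disjoint b g : starts b g -> starts (negb b) g -> False.
Proof.
  intros [n [e A]] [m [e' A']]. apply alt_inv in A'.
  rewrite <- (Bool.negb_involutive b) in A at 1.
  pose proof (alt_cat _ _ _ _ _ _ _ A' A) as C. rewrite gmul_Vl in C.
  exact (alt_neq1 _ _ _ _ C eq_refl).
Qed.

Lemma starts_mul_factor c y g :
  factor c y -> H g \/ (exists b, starts b g) ->
  H (gmul y g) \/ exists b, starts b (gmul y g).
Proof.
  intros fy [hg | [b [n [e A]]]].
  - destruct (factor_cases c (gmul y g)) as [h | l]; auto.
    + apply factor_mul; auto. apply H_factor; auto.
    + right. exists c, 1, c. constructor; auto.
  - destruct (Bool.bool_dec b c) as [<- | bc].
    + destruct A as [b a [fa _] | n b e a g' [fa _] A].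
      * destruct (factor_cases b (gmul y a)) as [h | l]; auto using factor_mul.
        right. exists b, 1, b. constructor; auto.
      * right. rewrite gmul_assoc.
        destruct (factor_cases b (gmul y a)) as [h | l]; auto using factor_mul.
        -- exists (negb b), n, e. apply alt_mull_H; auto.
        -- exists b, (S n), e. constructor; auto.
    + right. rewrite (neq_negb b c bc) in A.
      destruct (factor_cases c y) as [h | l]; auto.
      * exists (negb c), n, e. apply alt_mull_H; auto.
      * exists c, (S n), e. constructor; auto.
Qed.

Lemma H_or_starts g : H g \/ exists b, starts b g.
Proof.
  destruct amalgam as [_ [_ [_ [generated _]]]].
  destruct (generated g) as [l [F ->]]. induction F as [|y l Fy F IH].
  - left. apply H_subgroup.
  - destruct Fy as [f | f];
      [apply (starts_mul_factor false) | apply (starts_mul_factor true)]; auto.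
Qed.

Lemma starts_or_not_starting b g : starts b g \/ not_starting b g.
Proof.
  unfold not_starting. destruct (H_or_starts g) as [h | [c X]]; [tauto|].
  destruct (Bool.bool_dec b c) as [<- | bc]; [tauto|].
  rewrite (neq_negb c b (not_eq_sym bc)) in X. tauto.
Qed.

Lemma letter_mul_not_starting b a y :
  letter b a -> not_starting b y -> starts b (gmul a y).
Proof.
  intros la [hy | [n [e A]]].
  - exists 1, b. constructor. apply letter_mulr; auto.
  - exists (S n), e. constructor; auto.
Qed.

Section CyclicReduction.
Variable B : bool.

Definition cyclically_reduced (g : G) : Prop :=
  (exists c, letter c g) \/ (exists n, alt n B (negb B) g).

Definition conj_cyclically_reduced (f : G) : Prop :=
  exists t, cyclically_reduced (conjg G t f).

Lemma conj_cyclically_reduced_conjg s f :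
  conj_cyclically_reduced (conjg G s f) -> conj_cyclically_reduced f.
Proof. intros [t Ht]. exists (gmul s t). rewrite <- conjgM. exact Ht. Qed.

Lemma alt_even_conj_cyclically_reduced n b f :
  alt n b (negb b) f -> conj_cyclically_reduced f.
Proof.
  intro A. destruct (Bool.bool_dec b B) as [-> | bB].
  - exists gone. right. exists n. rewrite conjg1. exact A.
  - rewrite (neq_negb b B bB) in A.
    destruct (alt_first _ _ _ _ A) as [a [g [la [Ag ->]]]];
      [apply (alt_length_ge2 _ _ _ _ A); destruct B; discriminate|].
    rewrite Bool.negb_involutive in Ag.
    exists a. right. exists (n - 1 + 1). unfold conjg. rewrite mulgA, mulKg.
    apply alt_cat with (e := B); auto. constructor. exact la.
Qed.

(* Conjugating by the first letter moves it to the end, where it merges with the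
   last letter; the length drops by two unless the merged letter survives. *)
Lemma alt_odd_conj_cyclically_reduced n : forall b f,
  alt n b b f -> conj_cyclically_reduced f.
Proof.
  induction n as [n IH] using lt_wf_ind. intros b f A.
  destruct (le_lt_dec 2 n) as [ge2 | lt2].
  - destruct (alt_first _ _ _ _ A ge2) as [a [g [la [Ag ->]]]].
    assert (nb : negb b <> b) by (destruct b; discriminate).
    destruct (alt_last _ _ _ _ Ag nb) as [m [x [Am [lx ->]]]].
    apply conj_cyclically_reduced_conjg with (s := a).
    replace (conjg G a (gmul a (gmul m x))) with (gmul m (gmul x a))
      by (unfold conjg; rewrite !mulgA, mulKg; reflexivity).
    destruct (factor_cases b (gmul x a)) as [h | l];
      [apply factor_mul; [apply lx | apply la] | |].
    + apply (IH (n - 1 - 1)) with (b := negb b); [lia|]. apply alt_mulr_H; auto.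
    + apply (alt_even_conj_cyclically_reduced (n - 1 - 1 + 1) (negb b)).
      rewrite Bool.negb_involutive. apply alt_cat with (e := negb b); auto.
      rewrite Bool.negb_involutive. constructor. exact l.
  - destruct A as [b a la | n b e a g la Ag].
    + exists gone. left. exists b. rewrite conjg1. exact la.
    + apply alt_length_pos in Ag. lia.
Qed.

Lemma starts_conj_cyclically_reduced b f : starts b f -> conj_cyclically_reduced f.
Proof.
  intros [n [e A]]. destruct (Bool.bool_dec b e) as [<- | be].
  - eapply alt_odd_conj_cyclically_reduced; eauto.
  - rewrite (neq_negb e b (not_eq_sym be)) in A.
    eapply alt_even_conj_cyclically_reduced; eauto.
Qed.

(* The trivial kernel is used only here, to conjugate [f] out of [H]. *)
Lemma nontrivial_conj_cyclically_reduced f :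
  trivial_kernel G H -> f <> gone -> conj_cyclically_reduced f.
Proof.
  intros TK nf. assert (ex : exists g, ~ H (conjg G g f)).
  { apply not_all_ex_not. intro all. exact (nf (TK f all)). }
  destruct ex as [g ng]. apply conj_cyclically_reduced_conjg with (s := g).
  destruct (H_or_starts (conjg G g f)) as [hh | [b X]]; [contradiction|].
  eapply starts_conj_cyclically_reduced; eauto.
Qed.

End CyclicReduction.

Section PingPong.
Variables (B : bool) (a1 a2 c : G).
Hypotheses (la1 : letter B a1) (la2 : letter B a2) (la12 : ~ H (gmul (ginv a1) a2))
  (lc : letter (negb B) c).

Fixpoint a1c_pow (i : nat) : G :=
  match i with 0 => gone | S i => gmul (gmul a1 c) (a1c_pow i) end.

Lemma a1c_powD i m : a1c_pow (i + m) = gmul (a1c_pow i) (a1c_pow m).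
Proof.
  induction i; simpl; [rewrite gmul_1l; reflexivity|]. rewrite IHi, !mulgA. reflexivity.
Qed.

Lemma a1c_pow_a2_starts m y : not_starting B y -> starts B (gmul (a1c_pow m) (gmul a2 y)).
Proof.
  intro hy. induction m; simpl.
  - rewrite gmul_1l. apply letter_mul_not_starting; auto.
  - rewrite !mulgA. apply letter_mul_not_starting; auto. right.
    apply letter_mul_not_starting; auto. right. rewrite Bool.negb_involutive. exact IHm.
Qed.

(* After cancelling [(a1 c)^i], one side starts with the letter [a1^-1 a2] of
   [factor B] and the other with [c]. *)
Lemma a1c_pow_a2_translates_lt i j x y : i < j -> not_starting B x -> not_starting B y ->
  gmul (gmul (a1c_pow i) a2) x <> gmul (gmul (a1c_pow j) a2) y.
Proof.
  intros ij hx hy Eq. destruct (Nat.le_exists_sub (S i) j ij) as [m [-> _]].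
  replace (m + S i) with (i + S m) in Eq by lia.
  rewrite a1c_powD, !mulgA in Eq. apply mulg_cancel_l in Eq.
  simpl in Eq. rewrite !mulgA in Eq.
  assert (Eq' : gmul (gmul (ginv a1) a2) x = gmul c (gmul (a1c_pow m) (gmul a2 y))).
  { rewrite mulgA, Eq, mulKg. reflexivity. }
  apply (starts_disjoint B (gmul (gmul (ginv a1) a2) x)).
  - apply letter_mul_not_starting; auto.
    apply letter_left_quotient; auto; apply la1 || apply la2.
  - rewrite Eq'. apply letter_mul_not_starting; auto.
    right. rewrite Bool.negb_involutive. apply a1c_pow_a2_starts; auto.
Qed.

Lemma not_starting_disjoint_translates k : has_disjoint_translates G k (not_starting B).
Proof.
  exists (fun i => gmul (a1c_pow i) a2). intros i j _ _ ij x y hx hy.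
  destruct (Nat.lt_total i j) as [l | [l | l]]; [| contradiction |].
  - apply a1c_pow_a2_translates_lt; auto.
  - intro E. symmetry in E. revert E. apply a1c_pow_a2_translates_lt; auto.
Qed.

Lemma starts_disjoint_translates k b : has_disjoint_translates G k (starts b).
Proof.
  assert (nsB : forall b, has_disjoint_translates G k (not_starting b)).
  { intro b'. destruct (Bool.bool_dec b' B) as [-> | bB];
      [apply not_starting_disjoint_translates|].
    rewrite (neq_negb b' B bB).
    apply disjoint_translates_sub with (E := not_starting B) (u := c);
      [apply not_starting_disjoint_translates|].
    intros y hy. right. apply letter_mul_not_starting; auto. }
  apply disjoint_translates_sub with (E := not_starting (negb b)) (u := gone); auto.
  intros y hy. rewrite gmul_1l. right. rewrite Bool.negb_involutive. exact hy.
Qed.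

Lemma letter_weak_powers_at k b f : letter b f -> weak_powers_at G k f.
Proof.
  intro lf. exists (starts b). split; [apply starts_disjoint_translates|]. intro x.
  destruct (starts_or_not_starting b x) as [h | h]; [left; auto | right].
  apply letter_mul_not_starting; auto.
Qed.

Lemma letter_off_left_coset s : exists a, letter B a /\ ~ H (gmul (ginv s) a).
Proof.
  destruct (classic (H (gmul (ginv s) a1))) as [h1 | h1]; [| exists a1; auto].
  destruct (classic (H (gmul (ginv s) a2))) as [h2 | h2]; [| exists a2; auto].
  exfalso. apply la12.
  replace (gmul (ginv a1) a2) with (gmul (ginv (gmul (ginv s) a1)) (gmul (ginv s) a2)).
  - apply H_mul; auto. apply H_inv; auto.
  - rewrite invMg, invgK, !mulgA, mulKVg. reflexivity.
Qed.

(* For [f = s r] with [s] its first letter, [E] is the union of the set of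
   elements not starting in [factor B] and its translate by [s]. *)
Lemma alt_even_weak_powers_at k n f : alt n B (negb B) f -> weak_powers_at G k f.
Proof.
  intro A. destruct (alt_first _ _ _ _ A) as [s [r [ls [Ar ->]]]];
    [apply (alt_length_ge2 _ _ _ _ A); destruct B; discriminate|].
  exists (fun y => not_starting B y \/ not_starting B (gmul (ginv s) y)). split.
  - destruct (letter_off_left_coset s) as [a [la na]].
    apply disjoint_translates_sub with (E := starts B) (u := ginv a);
      [apply starts_disjoint_translates|].
    intros y [hy | hy].
    + apply letter_mul_not_starting; auto. apply letter_inv; auto.
    + replace (gmul (ginv a) y) with (gmul (gmul (ginv a) s) (gmul (ginv s) y))
        by (rewrite mulgA, mulKVg; reflexivity).
      apply letter_mul_not_starting; auto.
      replace (gmul (ginv a) s) with (ginv (gmul (ginv s) a))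
        by (rewrite invMg, invgK; reflexivity).
      apply letter_inv, letter_left_quotient; auto; apply ls || apply la.
  - intro x. destruct (starts_or_not_starting B x) as [[m [e Ax]] | h]; [| left; left; auto].
    right. right. rewrite mulgA, mulKg. right.
    exists (n - 1 + m), e. apply alt_cat with (e := negb B); auto.
    rewrite Bool.negb_involutive. exact Ax.
Qed.

End PingPong.

Lemma index_ge2_letter b : index_ge G (factor b) H 2 -> exists c, letter b c.
Proof.
  intros [a [fa dist]]. exists (gmul (ginv (a 0)) (a 1)).
  apply letter_left_quotient; [apply fa; lia .. | apply dist; lia].
Qed.

Lemma index_ge3_letters b : index_ge G (factor b) H 3 ->
  exists a1 a2, letter b a1 /\ letter b a2 /\ ~ H (gmul (ginv a1) a2).
Proof.
  intros [a [fa dist]].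
  exists (gmul (ginv (a 0)) (a 1)), (gmul (ginv (a 0)) (a 2)).
  split; [|split]; try (apply letter_left_quotient; [apply fa; lia .. | apply dist; lia]).
  rewrite invMg, invgK, !mulgA, mulKVg. apply dist; lia.
Qed.

Lemma nondegenerate_weak_powers_at k f : nondegenerate G G0 G1 H ->
  trivial_kernel G H -> f <> gone -> weak_powers_at G k f.
Proof.
  intros [i0 [i1 i3]] TK nf.
  assert (big : exists B, index_ge G (factor B) H 3 /\ index_ge G (factor (negb B)) H 2)
    by (destruct i3; [exists false | exists true]; auto).
  destruct big as [B [iB iB']].
  destruct (index_ge3_letters B iB) as [a1 [a2 [la1 [la2 la12]]]].
  destruct (index_ge2_letter (negb B) iB') as [c lc].
  destruct (nontrivial_conj_cyclically_reduced B f TK nf) as [t [[b lt] | [n A]]];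
    apply weak_powers_at_conjg with (t := t).
  - exact (letter_weak_powers_at B a1 a2 c la1 la2 la12 lc k b _ lt).
  - exact (alt_even_weak_powers_at B a1 a2 c la1 la2 la12 lc k n _ A).
Qed.

End Amalgam.

Theorem proposition5p5 (G : Group) (G0 G1 H : G -> Prop) :
  is_amalgam G G0 G1 H ->
  nondegenerate G G0 G1 H ->
  trivial_kernel G H ->
  weak_star_Powers G.
Proof.
  intros amalgam nondeg TK. apply weak_star_Powers_of_weak_powers_at.
  intros f nf k _. exact (nondegenerate_weak_powers_at G G0 G1 H amalgam k f nondeg TK nf).
Qed.
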